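(* Let $N=\{1,\dots,n\}$ be any set of agents and $M$ a set of $m$ chores with $m\le n+2$, where each agent $i$ has a normalized monotone cost function $c_i:2^M\to\mathbb{R}_{\ge0}$. Then an EFX allocation exists.
   Context: A cost function $c_i$ is normalized if $c_i(\emptyset)=0$ and monotone if $c_i(S\cup\{e\})\ge c_i(S)$ for all $S\subseteq M$, $e\in M$. An allocation is a partition $X=(X_1,\dots,X_n)$ of $M$ into $n$ (possibly empty) bundles, agent $i$ receiving $X_i$. $X$ is EFX if for all agents $i,j$ and every chore $e\in X_i$, $c_i(X_i\setminus\{e\})\le c_i(X_j)$. *)

From HB Require Import structures.
From mathcomp Require Import all_boot all_order all_algebra.
From mathcomp Require Import reals.
Set Implicit Arguments. Unset Strict Implicit. Unset Printing Implicit Defensive.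
Import Order.TTheory GRing.Theory Num.Theory.
Local Open Scope ring_scope.

Definition normalized (R : realType) (M : finType) (c : {set M} -> R) : Prop :=
  c set0 = 0.

Definition monotone (R : realType) (M : finType) (c : {set M} -> R) : Prop :=
  forall (S : {set M}) (e : M), c S <= c (e |: S).

Definition nonneg_cost (R : realType) (M : finType) (c : {set M} -> R) : Prop :=
  forall S : {set M}, 0 <= c S.

Definition is_allocation (n : nat) (M : finType) (X : 'I_n -> {set M}) : Prop :=
  (forall i j : 'I_n, i != j -> [disjoint X i & X j]) /\
  (\bigcup_(i < n) X i = [set: M]).

Definition EFX (R : realType) (n : nat) (M : finType)
    (c : 'I_n -> {set M} -> R) (X : 'I_n -> {set M}) : Prop :=
  forall (i j : 'I_n) (e : M), e \in X i -> c i (X i :\ e) <= c i (X j).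

From HB Require Import structures.
From mathcomp Require Import all_boot all_order all_algebra.
From mathcomp Require Import reals zify.
Import Order.TTheory GRing.Theory Num.Theory.
Local Open Scope ring_scope.
Set Implicit Arguments. Unset Strict Implicit. Unset Printing Implicit Defensive.

(* If m <= n, every agent gets at most one chore. Otherwise one or two agents
   receive a small bundle and every other agent exactly one of the remaining
   chores. An agent holding at most one chore is never envious up to a chore,
   so EFX only has to be checked for the small bundles, against each other and
   against single chores. For m = n + 1 the first agent takes its two cheapest
   chores. For m = n + 2 two agents with costs c1, c2 suffice. Let A = {q1, q2}
   be the two cheapest chores for c2, p the cheapest chore for c1 outside A,
   T = A + p, and w (resp. y) the cheapest chore for c1 (resp. c2) outside T.
   - If c1{w} <= c1(A), the agents take {p, w} and A.
   - Otherwise T consists of the cheapest chores for c1. If c2{y} < c2{p},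
     the agents take {q1, p} and {q2, y}.
   - Otherwise T consists of the cheapest chores for both agents. Agent 1 takes
     T, unless some T - e costs it more than w; then the agents take {e, w}
     and T - e. *)

Section CheapChores.
Context {R : realType} {M : finType}.
Implicit Types (c : {set M} -> R) (S T A B P Q Y : {set M}).

Definition efx_wrt c B Y := forall e, e \in B -> c (B :\ e) <= c Y.
Definition below c B Y := forall b, b \in B -> c [set b] <= c Y.
Definition lower_set c T := forall z, z \notin T -> below c T [set z].
Definition cheapest_outside c S x :=
  x \notin S /\ forall z, z \notin S -> c [set x] <= c [set z].

Lemma monotone_subset c S T : monotone c -> S \subset T -> c S <= c T.
Proof.
move=> mono; elim: {T}_.+1 {-2}T (ltnSn #|T|) => // k IH T ltTk sST.
have [->//|neST] := eqVneq S T.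
have /properP[_ [x xT xS]] : S \proper T by rewrite properEneq neST.
rewrite -(setD1K xT); apply: le_trans (mono _ x); apply: IH.
  by rewrite (cardsD1 x T) xT in ltTk.
by rewrite subsetD1 sST.
Qed.

Lemma cost_set1_le c b B : monotone c -> b \in B -> c [set b] <= c B.
Proof. by move=> mono bB; apply: monotone_subset; rewrite ?sub1set. Qed.

Lemma below2 c a b Y : c [set a] <= c Y -> c [set b] <= c Y -> below c [set a; b] Y.
Proof. by move=> ha hb x /set2P[]->. Qed.

Lemma efx_wrt_card2 c B Y : #|B| = 2%N -> below c B Y -> efx_wrt c B Y.
Proof.
move=> B2 belowB e eB.
have /cards1P[b Be] : #|B :\ e| == 1%N by move: B2; rewrite (cardsD1 e) eB add1n => -[->].
by rewrite Be; apply: belowB; apply: (subsetP (subD1set B e)); rewrite Be set11.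
Qed.

Lemma exists_cheapest_outside c S : (#|S| < #|M|)%N -> exists x, cheapest_outside c S x.
Proof.
move=> ltS; have /set0Pn[x0] : ~: S != set0.
  by rewrite -card_gt0; move: (cardsC S) ltS; lia.
rewrite inE => x0S.
have [x xS min_x] := @arg_minP _ _ _ x0 [pred x | x \notin S] (fun x => c [set x]) x0S.
by exists x.
Qed.

Lemma lower_set_setU1 c S x :
  lower_set c S -> cheapest_outside c S x -> lower_set c (x |: S).
Proof.
move=> lowS [xS min_x] z; rewrite in_setU1 negb_or => /andP[_ zS] y /setU1P[->|].
  exact: min_x.
exact: lowS.
Qed.

Lemma exists_lower_pair c : (1 < #|M|)%N ->
  exists q1 q2, q1 != q2 /\ lower_set c [set q1; q2].
Proof.
move=> M2; have [q1 [_ min1]] : exists q1, cheapest_outside c set0 q1.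
  by apply: exists_cheapest_outside; rewrite cards0; lia.
have [q2 cheap_q2] : exists q2, cheapest_outside c [set q1] q2.
  by apply: exists_cheapest_outside; rewrite cards1.
exists q2, q1; split; first by have [] := cheap_q2; rewrite inE.
by apply: lower_set_setU1 cheap_q2 => z _ y /set1P->; apply: min1; rewrite inE.
Qed.

Definition efx_pair_split c1 c2 P Q :=
  [/\ #|P| = 2%N, #|Q| = 2%N, [disjoint P & Q], efx_wrt c1 P Q /\ efx_wrt c2 Q P &
      forall z, z \notin P :|: Q -> efx_wrt c1 P [set z] /\ efx_wrt c2 Q [set z]].

Definition two_agent_split c1 c2 :=
  (exists2 T : {set M}, #|T| = 3%N & forall z, z \notin T -> efx_wrt c1 T [set z]) \/
  (exists P Q : {set M}, efx_pair_split c1 c2 P Q).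

Lemma efx_pair_split_of_below c1 c2 P Q :
    #|P| = 2%N -> #|Q| = 2%N -> [disjoint P & Q] -> below c1 P Q -> below c2 Q P ->
    (forall z, z \notin P :|: Q -> below c1 P [set z] /\ below c2 Q [set z]) ->
  efx_pair_split c1 c2 P Q.
Proof.
by move=> P2 Q2 dPQ bPQ bQP bz; split=> // [|z /bz[]]; split; exact: efx_wrt_card2.
Qed.

Lemma efx_pair_split_next_cheapest c1 c2 A p w : monotone c2 -> #|A| = 2%N ->
    lower_set c2 A -> cheapest_outside c1 A p -> cheapest_outside c1 (p |: A) w ->
    c1 [set w] <= c1 A ->
  efx_pair_split c1 c2 [set p; w] A.
Proof.
move=> mono2 A2 lowA [pA min_p] [wT min_w] le_wA.
have wA : w \notin A by apply: contra wT => wA; rewrite in_setU1 wA orbT.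
have pw : p != w by apply: contraNneq wT => <-; rewrite in_setU1 eqxx.
apply: efx_pair_split_of_below => //.
- by rewrite cards2 pw.
- by rewrite disjoints_subset subUset !sub1set !in_setC pA.
- by apply: below2 => //; apply: le_trans le_wA; exact: min_p.
- move=> b bA; apply: le_trans (lowA p pA b bA) (cost_set1_le mono2 _).
  by rewrite in_set2 eqxx.
move=> z; rewrite in_setU => /norP[+ zA]; rewrite in_set2 negb_or => /andP[zp _].
split; last exact: lowA.
by apply: below2; [exact: min_p | apply: min_w; rewrite in_setU1 negb_or zp].
Qed.

Lemma efx_pair_split_exchange c1 c2 q1 q2 p y : monotone c1 -> monotone c2 ->
    q1 != q2 -> lower_set c2 [set q1; q2] -> p \notin [set q1; q2] ->
    lower_set c1 (p |: [set q1; q2]) -> cheapest_outside c2 (p |: [set q1; q2]) y ->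
    c2 [set y] < c2 [set p] ->
  efx_pair_split c1 c2 [set q1; p] [set q2; y].
Proof.
move=> mono1 mono2 q12 lowA pA lowT [yT min_y] lt_yp.
have q1T : q1 \in p |: [set q1; q2] by rewrite !inE eqxx orbT.
have pT : p \in p |: [set q1; q2] by rewrite !inE eqxx.
have q1p : q1 != p by apply: contraNneq pA => <-; rewrite !inE eqxx.
have q2y : q2 != y by apply: contraNneq yT => <-; rewrite !inE eqxx !orbT.
have q1y : q1 != y by apply: contraNneq yT => <-.
have py : p != y by apply: contraNneq yT => <-.
have pq2 : p != q2 by apply: contraNneq pA => ->; rewrite !inE eqxx orbT.
apply: efx_pair_split_of_below; rewrite ?cards2 ?q1p ?q2y //.
- by rewrite disjoints_subset subUset !sub1set !in_setC !in_set2 !negb_or q12 q1y pq2 py.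
- have yQ : c1 [set y] <= c1 [set q2; y].
    by apply: cost_set1_le; rewrite // in_set2 eqxx orbT.
  by apply: below2; apply: le_trans yQ; apply: lowT.
- have pP : c2 [set p] <= c2 [set q1; p].
    by apply: cost_set1_le; rewrite // in_set2 eqxx orbT.
  apply: below2; apply: le_trans pP; last exact: ltW.
  by apply: lowA; rewrite // in_set2 eqxx orbT.
move=> z; rewrite in_setU !in_set2 !negb_or => /andP[/andP[zq1 zp] /andP[zq2 zy]].
have zA : z \notin [set q1; q2] by rewrite in_set2 negb_or zq1.
have zT : z \notin p |: [set q1; q2] by rewrite in_setU1 negb_or zp.
split; apply: below2; [exact: lowT | exact: lowT | | exact: min_y].
by apply: lowA; rewrite // in_set2 eqxx orbT.
Qed.

Lemma two_agent_split_of_lower c1 c2 T w : monotone c2 -> #|T| = 3%N ->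
  lower_set c1 T -> lower_set c2 T -> cheapest_outside c1 T w -> two_agent_split c1 c2.
Proof.
move=> mono2 T3 low1 low2 [wT min_w].
have [/existsP[e /andP[eT lt_w]]|none] :=
  boolP [exists e in T, c1 [set w] < c1 (T :\ e)]; last first.
  left; exists T => // z zT e eT; apply: le_trans (min_w z zT).
  by move/existsPn: none => /(_ e); rewrite eT -leNgt.
have ew : e != w by apply: contraNneq wT => <-.
right; exists [set e; w], (T :\ e); apply: efx_pair_split_of_below.
- by rewrite cards2 ew.
- by move: T3; rewrite (cardsD1 e) eT add1n => -[].
- by rewrite disjoints_subset subUset !sub1set !inE eqxx /= negb_and wT orbT.
- by apply: below2; apply: ltW => //; apply: le_lt_trans lt_w; exact: low1.
- move=> b /setD1P[_ bT]; apply: le_trans (low2 w wT b bT) _.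
  by apply: cost_set1_le; rewrite // !inE eqxx orbT.
move=> z; rewrite in_setU in_set2 in_setD1 !negb_or negb_and negbK.
move=> /andP[/andP[ze zw] /orP[/eqP zeE|zT]]; first by rewrite zeE eqxx in ze.
split; first by apply: below2; [exact: low1 | exact: min_w].
by move=> b /setD1P[_ bT]; exact: low2.
Qed.

Lemma two_agent_split_exists c1 c2 : monotone c1 -> monotone c2 -> (3 < #|M|)%N ->
  two_agent_split c1 c2.
Proof.
move=> mono1 mono2 M4.
have [q1 [q2 [q12 lowA]]] := exists_lower_pair c2 (ltnW (ltnW M4)).
set A := [set q1; q2]; have A2 : #|A| = 2%N by rewrite cards2 q12.
have [p cheap_p] : exists p, cheapest_outside c1 A p.
  by apply: exists_cheapest_outside; rewrite A2; lia.
have [pA min_p] := cheap_p; set T := p |: A.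
have T3 : #|T| = 3%N by rewrite cardsU1 pA A2.
have [w cheap_w] : exists w, cheapest_outside c1 T w.
  by apply: exists_cheapest_outside; rewrite T3.
have [y cheap_y] : exists y, cheapest_outside c2 T y.
  by apply: exists_cheapest_outside; rewrite T3.
have [le_wA|lt_Aw] := leP (c1 [set w]) (c1 A).
  by right; exists [set p; w], A; exact: efx_pair_split_next_cheapest.
have lowT1 : lower_set c1 T.
  move=> z zT b /setU1P[->|bA].
    by apply: min_p; apply: contra zT => zA; rewrite in_setU1 zA orbT.
  apply: le_trans (cost_set1_le mono1 bA) _; apply: ltW; apply: lt_le_trans lt_Aw _.
  exact: cheap_w.2.
have [lt_yp|le_py] := ltP (c2 [set y]) (c2 [set p]).
  by right; exists [set q1; p], [set q2; y]; exact: efx_pair_split_exchange.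
apply: (two_agent_split_of_lower mono2 T3 lowT1 _ cheap_w).
apply: lower_set_setU1 lowA (conj pA _) => z zA.
have [->//|zp] := eqVneq z p.
by apply: le_trans le_py (cheap_y.2 z _); rewrite in_setU1 negb_or zp.
Qed.

End CheapChores.

(* [d] only serves to show that [T'] is inhabited whenever [T] is. *)
Lemma exists_bij_on (T T' : finType) (d : T -> T') (A : {set T}) (B : {set T'}) :
  #|A| = #|B| -> exists f : T -> T', {in A &, injective f} /\ f @: A = B.
Proof.
move=> AB; have [A0|[x0 x0A]] := set_0Vmem A.
  exists d; split=> [x|]; first by rewrite A0 inE.
  by apply/esym/eqP; rewrite A0 imset0 -cards_eq0 -AB A0 cards0.
pose f x := nth (d x0) (enum B) (index x (enum A)).
have idx x : x \in A -> (index x (enum A) < size (enum B))%N.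
  by move=> xA; rewrite -cardE -AB cardE index_mem mem_enum.
have f_inj : {in A &, injective f}.
  move=> x x' xA x'A /eqP; rewrite nth_uniq ?idx ?enum_uniq // => /eqP.
  by move/(congr1 (nth x0 (enum A))); rewrite !nth_index ?mem_enum.
exists f; split=> //; apply/eqP; rewrite eqEcard card_in_imset // AB leqnn andbT.
by apply/subsetP => _ /imsetP[x xA ->]; rewrite -mem_enum mem_nth ?idx.
Qed.

Section Allocation.
Context {R : realType} {n : nat} {M : finType} {c : 'I_n -> {set M} -> R}.
Hypotheses (c_ge0 : forall i, nonneg_cost (c i)) (c_set0 : forall i, normalized (c i))
  (c_mono : forall i, monotone (c i)).

Lemma is_allocation_fibers (g : M -> 'I_n) : is_allocation (fun i => [set e | g e == i]).
Proof.
split=> [i j ij|].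
  rewrite -setI_eq0; apply/eqP/setP => e; rewrite !inE.
  by apply: contraNF ij => /andP[/eqP<- /eqP<-].
by apply/setP => e; rewrite inE; apply/bigcupP; exists (g e); rewrite ?inE.
Qed.

Lemma efx_wrt_set1 i e Y : efx_wrt (c i) [set e] Y.
Proof. by move=> _ /set1P->; rewrite setDv c_set0; apply: c_ge0. Qed.

Lemma efx_wrt_refl i B : efx_wrt (c i) B B.
Proof. by move=> e _; apply: monotone_subset (subD1set B e). Qed.

Lemma efx_of_few_chores : (#|M| <= n)%N -> exists X, is_allocation X /\ EFX c X.
Proof.
move=> Mn; pose g e := widen_ord Mn (enum_rank e).
have g_inj : injective g by move=> e e' /(congr1 val) /= /ord_inj /enum_rank_inj.
exists (fun i => [set e | g e == i]); split; first exact: is_allocation_fibers.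
move=> i j e; rewrite inE => /eqP gei.
have -> : [set e' | g e' == i] = [set e].
  by apply/setP => e'; rewrite !inE -gei (inj_eq g_inj).
exact: efx_wrt_set1 (set11 e).
Qed.

Lemma efx_of_partial_assignment (H : {set M}) (K : {set 'I_n}) (g0 : M -> 'I_n) :
    #|~: H| = #|~: K| -> {in H, forall e, g0 e \in K} ->
    (forall i j, i \in K -> j \in K -> i != j ->
       efx_wrt (c i) [set e in H | g0 e == i] [set e in H | g0 e == j]) ->
    (forall i z, i \in K -> z \notin H ->
       efx_wrt (c i) [set e in H | g0 e == i] [set z]) ->
  exists X, is_allocation X /\ EFX c X.
Proof.
move=> HK g0K efxK efx1; have [f [f_inj fH]] := exists_bij_on g0 HK.
pose g e := if e \in H then g0 e else f e.
have fK e : e \notin H -> f e \notin K.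
  by move=> eH; rewrite -in_setC -fH imset_f // inE.
have gK i : i \in K -> [set e | g e == i] = [set e in H | g0 e == i].
  move=> iK; apply/setP => e; rewrite !inE /g; case: ifPn => // eH.
  by apply: contraNF (fK e eH) => /eqP->.
have gC j : j \notin K -> exists2 z, z \notin H & [set e | g e == j] = [set z].
  move=> jK; have /imsetP[z zH ->] : j \in f @: ~: H by rewrite fH inE.
  rewrite inE in zH; exists z => //; apply/setP => e; rewrite !inE /g.
  case: ifPn => eH; last by apply/eqP/eqP => [fez|->//]; apply: f_inj fez; rewrite inE.
  have /negbTE-> : g0 e != f z by apply: contraTneq (g0K e eH) => ->; exact: fK.
  by apply/esym/negbTE; apply: contraNneq zH => <-.
exists (fun i => [set e | g e == i]); split; first exact: is_allocation_fibers.
move=> i j; have [iK|iK] := boolP (i \in K); last first.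
  by have [z _ ->] := gC i iK; exact: efx_wrt_set1.
rewrite gK //; have [jK|jK] := boolP (j \in K).
  by rewrite gK //; have [<-|ij] := eqVneq i j; [exact: efx_wrt_refl | exact: efxK].
by have [z zH ->] := gC j jK; exact: efx1.
Qed.

Lemma efx_of_bundle (i0 : 'I_n) (B : {set M}) : #|~: B| = n.-1 ->
    (forall z, z \notin B -> efx_wrt (c i0) B [set z]) ->
  exists X, is_allocation X /\ EFX c X.
Proof.
move=> cardB efxB; have bundle : [set e in B | i0 == i0] = B.
  by apply/setP => e; rewrite inE eqxx andbT.
apply: (efx_of_partial_assignment (H := B) (K := [set i0]) (g0 := fun=> i0))
  => [||i j /set1P-> /set1P->|i z /set1P->].
- by rewrite cardsC1 card_ord.
- by move=> e _; exact: set11.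
- by rewrite eqxx.
- by rewrite bundle; exact: efxB.
Qed.

Lemma efx_of_bundle_pair (i1 i2 : 'I_n) (P Q : {set M}) : i1 != i2 ->
    #|~: (P :|: Q)| = (n - 2)%N -> efx_pair_split (c i1) (c i2) P Q ->
  exists X, is_allocation X /\ EFX c X.
Proof.
move=> i12 cardPQ [_ _ dPQ [efxPQ efxQP] efx1].
pose g0 e := if e \in P then i1 else i2.
have bundle1 : [set e in P :|: Q | g0 e == i1] = P.
  apply/setP => e; rewrite !inE /g0; case: ifPn => eP; rewrite ?eqxx ?orbT //.
  by rewrite eq_sym (negbTE i12) andbF.
have bundle2 : [set e in P :|: Q | g0 e == i2] = Q.
  apply/setP => e; rewrite !inE /g0; case: ifPn => eP; last by rewrite eqxx andbT.
  by rewrite (negbTE i12) andbF (disjointFr dPQ eP).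
apply: (efx_of_partial_assignment (H := P :|: Q) (K := [set i1; i2]) (g0 := g0)).
- have := cardsC [set i1; i2]; rewrite cards2 i12 card_ord => cardK.
  by rewrite cardPQ -[in LHS]cardK addKn.
- by move=> e _; rewrite /g0 !inE; case: ifP; rewrite eqxx ?orbT.
- by move=> i j /set2P[]-> /set2P[]->; rewrite ?eqxx // bundle1 bundle2.
- by move=> i z /set2P[]-> zPQ; rewrite ?bundle1 ?bundle2; case: (efx1 z zPQ).
Qed.

End Allocation.

Theorem theorem4 (R : realType) (n : nat) (M : finType)
    (c : 'I_n -> {set M} -> R)
    (hn : (0 < n)%N)
    (hm : (#|M| <= n + 2)%N)
    (hnonneg : forall i, nonneg_cost (c i))
    (hnorm : forall i, normalized (c i))
    (hmono : forall i, monotone (c i)) :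
  exists X : 'I_n -> {set M}, is_allocation X /\ EFX c X.
Proof.
have [few|many] := leqP #|M| n; first exact: efx_of_few_chores.
pose i0 : 'I_n := Ordinal hn.
have efx_bundle := efx_of_bundle hnonneg hnorm hmono (i0 := i0).
have [M_n1|M_n2] : #|M| = n.+1 \/ #|M| = n.+2 by lia.
  have [|q1 [q2 [q12 low]]] := exists_lower_pair (c i0); first lia.
  apply: (efx_bundle [set q1; q2]) => [|z zB].
    by move: (cardsC [set q1; q2]); rewrite cards2 q12; lia.
  by apply: efx_wrt_card2; [rewrite cards2 q12 | exact: low z zB].
have [n1|n2] := leqP n 1.
  by apply: (efx_bundle setT) => [|z]; rewrite ?setCT ?cards0 ?in_setT //; lia.
have [|[T T3 efxT]|[P [Q PQ]]] :=
  two_agent_split_exists (hmono i0) (hmono (Ordinal n2)); first lia.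
  by apply: (efx_bundle T) => //; move: (cardsC T); rewrite T3; lia.
apply: (efx_of_bundle_pair hnonneg hnorm hmono (i2 := Ordinal n2) _ _ PQ) => //.
have [P2 Q2 dPQ _ _] := PQ.
by move: (cardsC (P :|: Q)); rewrite cardsU (disjoint_setI0 dPQ) cards0 P2 Q2; lia.
Qed.
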